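(* Fix a $C^0$-concept over $\mathbb{K}$ and let $k\in\mathbb{N}_0\cup\{\infty\}$. Let $E,F,H\in\mathcal{M}$, $U\subseteq E$ and $V\subseteq F$ open, and let $f\colon U\to F$ with $f(U)\subseteq V$ and $g\colon V\to H$ be of class $C^k$. Then $g\circ f\colon U\to H$ is of class $C^k$.
   Context: Let $\mathbb{K}$ be a commutative ring with unit carrying a topology. A $C^0$-concept over $\mathbb{K}$ consists of: (a) a class $\mathcal{M}$ of topologized $\mathbb{K}$-modules with $\mathbb{K}\in\mathcal{M}$; (b) for $E,F\in\mathcal{M}$ and open $U\subseteq E$, a set $C^0(U,F)$ of continuous maps; (c) for $E_1,E_2\in\mathcal{M}$ a topology on $E_1\times E_2$ (not necessarily the product topology) making it a member of $\mathcal{M}$; subject to: (I.1) composites of $C^0$-maps are $C^0$, identities and inclusions of open subsets are $C^0$; (I.2) $x\mapsto rx+b$ is $C^0$; (I.3) $t\mapsto tv+x$ is $C^0$; (I.4) $\mathbb{K}^\times$ is open and inversion is $C^0$; (I.5) $C^0$ is local on open covers; (II.1) projections and $v\mapsto(v,y)$, $w\mapsto(x,w)$ are $C^0$; (II.2) $f_1\times f_2$ is $C^0$ for $C^0$-maps $f_i$; (II.3) diagonals are $C^0$; (II.4) exchange/associativity maps of products are $C^0$ both ways; (II.5) addition and scalar multiplication are $C^0$; (III) a $C^0$-map on open $U\subseteq\mathbb{K}$ is determined by its values on $U\cap\mathbb{K}^\times$. For open $V\subseteq X$, $V^{[1]}=\{(x,v,t)\in V\times X\times\mathbb{K}:x+tv\in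 V\}$; a $C^0$-map $g$ is $C^1$ if there is a $C^0$-map $g^{[1]}\colon V^{[1]}\to Y$ with $g(x+tv)-g(x)=t\,g^{[1]}(x,v,t)$; recursively $V^{[k+1]}=(V^{[k]})^{[1]}$, $g$ is $C^{k+1}$ if $C^k$ and $g^{[k]}$ is $C^1$, $g^{[k+1]}=(g^{[k]})^{[1]}$; $C^\infty$ means $C^k$ for all $k\in\mathbb{N}_0$. *)

From HB Require Import structures.
From mathcomp Require Import all_boot all_algebra.
From mathcomp Require Import boolp classical_sets.

Set Implicit Arguments.
Unset Strict Implicit.
Unset Printing Implicit Defensive.

Import GRing.Theory.
Local Open Scope ring_scope.
Local Open Scope classical_set_scope.

Definition is_topology (T : Type) (O : set (set T)) : Prop :=
  [/\ O setT,
      (forall (I : Type) (A : I -> set T),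
          (forall i, O (A i)) -> O (\bigcup_(i in setT) A i))
    & (forall A B, O A -> O B -> O (A `&` B))].

Record topRing := TopRing {
  Kring :> comUnitRingType;
  Kopen : set (set Kring);
  Kopen_top : is_topology Kopen }.

(** A topologized K-module (no compatibility of topology and module
    operations is required). *)
Record tmod (K : topRing) := TMod {
  tcar :> lmodType K;
  topen : set (set tcar);
  topen_top : is_topology topen }.
Arguments topen {K} t _.
Arguments Kopen : clear implicits.

Definition Kt (K : topRing) : tmod K := @TMod K (GRing.regular K) (@Kopen K) (@Kopen_top K).

(** The data of a C^0-concept: (a) the class M, (b) the sets C^0(U,F),
    represented as predicates on total maps E -> F (only the values on U
    matter, see axiom [C0_ext]), (c) the topology on products. *)
Record C0data (K : topRing) := C0Data {
  inM : tmod K -> Prop;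
  C0 : forall E F : tmod K, set E -> (E -> F) -> Prop;
  prod_top : forall E1 E2 : tmod K,
      {O : set (set (tcar E1 * tcar E2)%type) | is_topology O} }.

Definition prodT (K : topRing) (D : C0data K) (E1 E2 : tmod K) : tmod K :=
  @TMod K (tcar E1 * tcar E2)%type (sval (prod_top D E1 E2))
        (svalP (prod_top D E1 E2)).

Record C0concept (K : topRing) (D : C0data K) : Prop := {
  M_prod : forall E1 E2, inM D E1 -> inM D E2 -> inM D (prodT D E1 E2);
  M_K : inM D (Kt K);
  C0_cont : forall (E F : tmod K) (U : set E) (f : E -> F),
      inM D E -> inM D F -> topen E U -> C0 D U f ->
      forall O, topen F O -> topen E (U `&` f @^-1` O);
  (* representation convention: a map on U is determined by its values on U *)
  C0_ext : forall (E F : tmod K) (U : set E) (f g : E -> F),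
      (forall x, U x -> f x = g x) -> C0 D U f -> C0 D U g;
  C0_comp : forall (E F H : tmod K) (U : set E) (V : set F)
      (f : E -> F) (g : F -> H),
      inM D E -> inM D F -> inM D H -> topen E U -> topen F V ->
      C0 D U f -> (forall x, U x -> V (f x)) -> C0 D V g -> C0 D U (g \o f);
  C0_id : forall (E : tmod K) (U : set E),
      inM D E -> topen E U -> C0 D U (@id E);
  C0_affine : forall (E : tmod K) (r : K) (b : E),
      inM D E -> C0 D setT (fun x : E => r *: x + b);
  C0_line : forall (E : tmod K) (v x : E),
      inM D E -> C0 (E := Kt K) (F := E) D setT (fun t : (GRing.regular K) => (t : K) *: v + x);
  units_open : topen (Kt K) [set t : (GRing.regular K) | (t : K) \is a GRing.unit];
  C0_inv : C0 (E := Kt K) (F := Kt K) D [set t : (GRing.regular K) | (t : K) \is a GRing.unit]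
      (fun t : (GRing.regular K) => ((t : K)^-1 : (GRing.regular K)));
  C0_local : forall (E F : tmod K) (U : set E) (f : E -> F)
      (I : Type) (W : I -> set E),
      inM D E -> inM D F -> topen E U -> (forall i, topen E (W i)) ->
      \bigcup_(i in setT) W i = U -> (forall i, C0 D (W i) f) -> C0 D U f;
  C0_fst : forall E1 E2 : tmod K, inM D E1 -> inM D E2 ->
      C0 (E := prodT D E1 E2) (F := E1) D setT fst;
  C0_snd : forall E1 E2 : tmod K, inM D E1 -> inM D E2 ->
      C0 (E := prodT D E1 E2) (F := E2) D setT snd;
  C0_pairl : forall (E1 E2 : tmod K) (y : E2), inM D E1 -> inM D E2 ->
      C0 (E := E1) (F := prodT D E1 E2) D setT (fun v : E1 => (v, y));
  C0_pairr : forall (E1 E2 : tmod K) (x : E1), inM D E1 -> inM D E2 ->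
      C0 (E := E2) (F := prodT D E1 E2) D setT (fun w : E2 => (x, w));
  C0_prodmap : forall (E1 E2 F1 F2 : tmod K) (U1 : set E1) (U2 : set E2)
      (f1 : E1 -> F1) (f2 : E2 -> F2),
      inM D E1 -> inM D E2 -> inM D F1 -> inM D F2 ->
      topen E1 U1 -> topen E2 U2 -> C0 D U1 f1 -> C0 D U2 f2 ->
      C0 (E := prodT D E1 E2) (F := prodT D F1 F2) D
         [set p | U1 p.1 /\ U2 p.2] (fun p => (f1 p.1, f2 p.2));
  C0_diag : forall E : tmod K, inM D E ->
      C0 (E := E) (F := prodT D E E) D setT (fun x : E => (x, x));
  C0_swap : forall E1 E2 : tmod K, inM D E1 -> inM D E2 ->
      C0 (E := prodT D E1 E2) (F := prodT D E2 E1) D setT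
         (fun p => (p.2, p.1));
  C0_assoc : forall E1 E2 E3 : tmod K, inM D E1 -> inM D E2 -> inM D E3 ->
      C0 (E := prodT D (prodT D E1 E2) E3) (F := prodT D E1 (prodT D E2 E3)) D
         setT (fun p => (p.1.1, (p.1.2, p.2)));
  C0_assocV : forall E1 E2 E3 : tmod K, inM D E1 -> inM D E2 -> inM D E3 ->
      C0 (E := prodT D E1 (prodT D E2 E3)) (F := prodT D (prodT D E1 E2) E3) D
         setT (fun p => ((p.1, p.2.1), p.2.2));
  C0_add : forall E : tmod K, inM D E ->
      C0 (E := prodT D E E) (F := E) D setT (fun p => p.1 + p.2);
  C0_scale : forall E : tmod K, inM D E ->
      C0 (E := prodT D (Kt K) E) (F := E) D setT
         (fun p => (p.1 : K) *: (p.2 : E));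
  C0_units_dense : forall (F : tmod K) (U : set (Kt K)) (f g : Kt K -> F),
      inM D F -> topen (Kt K) U -> C0 D U f -> C0 D U g ->
      (forall t, U t -> (t : K) \is a GRing.unit -> f t = g t) ->
      forall t, U t -> f t = g t }.

Section Differentiability.
Variables (K : topRing) (D : C0data K).

Definition ext1 (X : tmod K) : tmod K := prodT D (prodT D X X) (Kt K).

Definition V1 (X : tmod K) (V : set X) : set (ext1 X) :=
  [set p | V p.1.1 /\ V (p.1.1 + (p.2 : K) *: p.1.2)].

Fixpoint extk (X : tmod K) (n : nat) : tmod K :=
  match n with 0 => X | n'.+1 => ext1 (extk X n') end.

Fixpoint Vk (X : tmod K) (V : set X) (n : nat) : set (extk X n) :=
  match n as m return set (extk X m) with
  | 0 => V
  | n'.+1 => V1 (@Vk X V n')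
  end.
Arguments Vk {X} V n.

Definition is_deriv1 (X Y : tmod K) (V : set X) (g : X -> Y)
    (g1 : ext1 X -> Y) : Prop :=
  C0 D (V1 V) g1 /\
  forall p : ext1 X, V1 V p ->
    g (p.1.1 + (p.2 : K) *: p.1.2) - g p.1.1 = (p.2 : K) *: g1 p.

Definition isC1 (X Y : tmod K) (V : set X) (g : X -> Y) : Prop :=
  C0 D V g /\ exists g1, is_deriv1 V g g1.

Definition isCn (X Y : tmod K) (n : nat) (V : set X) (g : X -> Y) : Prop :=
  C0 D V g /\
  exists G : forall j : nat, extk X j -> Y,
    (forall x, V x -> G 0%N x = g x) /\
    (forall j : nat, (j < n)%N -> is_deriv1 (Vk V j) (G j) (G j.+1)).

Inductive smoothness := Fin of nat | Infty.

Definition isCk (X Y : tmod K) (k : smoothness) (V : set X) (g : X -> Y)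
    : Prop :=
  match k with
  | Fin n => isCn n V g
  | Infty => forall n : nat, isCn n V g
  end.

End Differentiability.
Arguments Fin n : clear implicits.
Arguments Infty : clear implicits.

From mathcomp Require Import all_boot all_algebra.
From mathcomp Require Import boolp classical_sets.
From mathcomp Require Import zify.

(** The chain of [1]-maps in the definition of C^n can be read recursively:
    g is C^(n+1) on V iff g is C^0 and has a [1]-map g^[1] that is C^n on
    V^[1].  In this form the chain rule
      (g o f)^[1](x, v, t) = g^[1](f x, f^[1](x, v, t), t),
    which follows from f(x + t v) = f x + t f^[1](x, v, t), gives the claim by
    induction on n: the inner map (x, v, t) |-> (f x, f^[1](x, v, t), t) is
    C^n, being a triple of C^n maps (f composed with a continuous linear
    projection is C^n by the induction hypothesis). *)

Set Implicit Arguments.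
Unset Strict Implicit.
Unset Printing Implicit Defensive.

Import GRing.Theory.
Local Open Scope ring_scope.
Local Open Scope classical_set_scope.

Section C0Calculus.
Variables (K : topRing) (D : C0data K) (HD : C0concept D).

Lemma topen_setT (X : tmod K) : topen X setT.
Proof. by case: (topen_top X). Qed.

Lemma topenI (X : tmod K) (A B : set X) :
  topen X A -> topen X B -> topen X (A `&` B).
Proof. by case: (topen_top X) => _ _; apply. Qed.

Lemma inM_ext1 (X : tmod K) : inM D X -> inM D (ext1 D X).
Proof. by move=> hX; apply: (M_prod HD); [apply: (M_prod HD) | apply: (M_K HD)]. Qed.

Lemma C0_sub (X Y : tmod K) (W W' : set X) (g : X -> Y) :
  inM D X -> inM D Y -> topen X W' -> topen X W ->
  W' `<=` W -> C0 D W g -> C0 D W' g.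
Proof.
move=> hX hY hW' hW sWW' cg.
apply: (C0_ext HD (f := g \o id)) => //.
exact: (C0_comp HD hX hX hY hW' hW (C0_id HD hX hW') sWW' cg).
Qed.

Lemma C0_setT_sub (X Y : tmod K) (W : set X) (g : X -> Y) :
  inM D X -> inM D Y -> topen X W -> C0 D setT g -> C0 D W g.
Proof. by move=> hX hY hW; apply: C0_sub hW (topen_setT X) _. Qed.

Lemma topen_preimage (X Y : tmod K) (h : X -> Y) (W : set Y) :
  inM D X -> inM D Y -> C0 D setT h -> topen Y W -> topen X (h @^-1` W).
Proof.
move=> hX hY ch hW.
by rewrite -[_ @^-1` _]setTI; apply: (C0_cont HD hX hY (topen_setT X) ch).
Qed.

Lemma C0_compT (X Y Z : tmod K) (h1 : X -> Y) (h2 : Y -> Z) :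
  inM D X -> inM D Y -> inM D Z -> C0 D setT h1 -> C0 D setT h2 ->
  C0 D setT (h2 \o h1).
Proof.
move=> hX hY hZ c1 c2.
exact: (C0_comp HD hX hY hZ (topen_setT X) (topen_setT Y) c1 (fun _ _ => I) c2).
Qed.

Lemma C0_pair (X Y1 Y2 : tmod K) (W : set X) (h1 : X -> Y1) (h2 : X -> Y2) :
  inM D X -> inM D Y1 -> inM D Y2 -> topen X W -> C0 D W h1 -> C0 D W h2 ->
  C0 (F := prodT D Y1 Y2) D W (fun x => (h1 x, h2 x)).
Proof.
move=> hX hY1 hY2 hW c1 c2.
have hXX := M_prod HD hX hX.
have oWW : topen (prodT D X X) [set p | W p.1 /\ W p.2].
  exact: topenI (topen_preimage hXX hX (C0_fst HD hX hX) hW)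
                (topen_preimage hXX hX (C0_snd HD hX hX) hW).
have cdiag : C0 (F := prodT D X X) D W (fun x : X => (x, x)).
  exact: C0_setT_sub (C0_diag HD hX).
apply: (C0_ext HD (F := prodT D Y1 Y2)
  (f := (fun p => (h1 p.1, h2 p.2)) \o (fun x => (x, x)))) => //.
apply: (C0_comp HD hX hXX (M_prod HD hY1 hY2) hW oWW cdiag) => //.
exact: (C0_prodmap HD hX hX hY1 hY2 hW hW c1 c2).
Qed.

Section Ext1.
Variables (X : tmod K) (hX : inM D X).

Let hXX := M_prod HD hX hX.
Let hX1 := inM_ext1 hX.

Lemma C0_ext1_point : C0 (E := ext1 D X) (F := X) D setT (fun p => p.1.1).
Proof.
by apply: (C0_ext HD _ (C0_compT hX1 hXX hX (C0_fst HD hXX (M_K HD)) (C0_fst HD hX hX))).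
Qed.

Lemma C0_ext1_direction : C0 (E := ext1 D X) (F := X) D setT (fun p => p.1.2).
Proof.
by apply: (C0_ext HD _ (C0_compT hX1 hXX hX (C0_fst HD hXX (M_K HD)) (C0_snd HD hX hX))).
Qed.

Lemma C0_ext1_scalar : C0 (E := ext1 D X) (F := Kt K) D setT (fun p => p.2).
Proof. exact: (C0_snd HD hXX (M_K HD)). Qed.

Lemma C0_ext1_shift :
  C0 (E := ext1 D X) (F := X) D setT (fun p => p.1.1 + (p.2 : K) *: p.1.2).
Proof.
have hKX := M_prod HD (M_K HD) hX.
have cscale : C0 (E := ext1 D X) (F := X) D setT (fun p => (p.2 : K) *: p.1.2).
  have cpair := C0_pair hX1 (M_K HD) hX (topen_setT _) C0_ext1_scalar C0_ext1_direction.
  by apply: (C0_ext HD _ (C0_compT hX1 hKX hX cpair (C0_scale HD hX))).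
have cpair := C0_pair hX1 hX hX (topen_setT _) C0_ext1_point cscale.
by apply: (C0_ext HD _ (C0_compT hX1 hXX hX cpair (C0_add HD hX))).
Qed.

Lemma topen_V1 (W : set X) : topen X W -> topen (ext1 D X) (V1 W).
Proof.
move=> hW; apply: topenI.
- exact: topen_preimage hX1 hX C0_ext1_point hW.
- exact: topen_preimage hX1 hX C0_ext1_shift hW.
Qed.

End Ext1.

Fixpoint isCr (n : nat) (X Y : tmod K) (W : set X) (g : X -> Y) : Prop :=
  match n with
  | 0 => C0 D W g
  | m.+1 => C0 D W g /\
      exists g1 : ext1 D X -> Y, is_deriv1 W g g1 /\ isCr m (V1 W) g1
  end.

Lemma isCr_C0 n (X Y : tmod K) (W : set X) (g : X -> Y) :
  isCr n W g -> C0 D W g.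
Proof. by case: n => [|n] //= []. Qed.

Lemma isCrS n (X Y : tmod K) (W : set X) (g : X -> Y) :
  isCr n.+1 W g -> isCr n W g.
Proof.
elim: n X Y W g => [|n IH] X Y W g /= [cg [g1 [dg1 rg1]]] //.
by split=> //; exists g1; split=> //; apply: IH.
Qed.

Lemma eq_isCr n (X Y : tmod K) (W : set X) (g g' : X -> Y) :
  (forall x, W x -> g x = g' x) -> isCr n W g -> isCr n W g'.
Proof.
move=> eqg; case: n => [|n] /=; first exact: (C0_ext HD eqg).
move=> [cg [g1 [[cg1 dg1] rg1]]]; split; first exact: (C0_ext HD eqg).
exists g1; split=> //; split=> // p [Wp Wp'].
by rewrite -!eqg //; apply: dg1.
Qed.

Lemma isCr_linear n (X Y : tmod K) (L : X -> Y) (W : set X) :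
  inM D X -> inM D Y -> linear L -> C0 D setT L -> topen X W -> isCr n W L.
Proof.
elim: n X Y L W => [|n IH] X Y L W hX hY linL cL hW; first exact: C0_setT_sub.
have cL1 : C0 (E := ext1 D X) D setT (fun p => L p.1.2).
  by apply: (C0_ext HD _ (C0_compT (inM_ext1 hX) hX hY (C0_ext1_direction hX) cL)).
split; first exact: C0_setT_sub.
exists (fun p => L p.1.2); split.
- split; first by apply: C0_setT_sub cL1 => //; [exact: inM_ext1 | exact: topen_V1].
  by move=> p _; rewrite (addrC p.1.1) linL addrK.
- apply: IH => //; [exact: inM_ext1 | by move=> a p q; rewrite -linL | exact: topen_V1].
Qed.

Lemma isCr_pair n (X Y1 Y2 : tmod K) (W : set X) (h1 : X -> Y1) (h2 : X -> Y2) :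
  inM D X -> inM D Y1 -> inM D Y2 -> topen X W -> isCr n W h1 -> isCr n W h2 ->
  isCr n (Y := prodT D Y1 Y2) W (fun x => (h1 x, h2 x)).
Proof.
elim: n X W h1 h2 => [|n IH] X W h1 h2 hX hY1 hY2 hW; first exact: C0_pair.
move=> [c1 [g1 [[cg1 dg1] rg1]]] [c2 [g2 [[cg2 dg2] rg2]]].
split; first exact: C0_pair.
exists (fun p => (g1 p, g2 p)); split.
- split; first by apply: C0_pair => //; [exact: inM_ext1 | exact: topen_V1].
  by move=> p Wp; congr pair; [apply: dg1 | apply: dg2].
- by apply: IH => //; [exact: inM_ext1 | exact: topen_V1].
Qed.

Lemma isCr_comp n (X Y Z : tmod K) (U : set X) (V : set Y)
    (f : X -> Y) (g : Y -> Z) :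
  inM D X -> inM D Y -> inM D Z -> topen X U -> topen Y V ->
  (forall x, U x -> V (f x)) -> isCr n U f -> isCr n V g -> isCr n U (g \o f).
Proof.
elim: n X Y Z U V f g => [|n IH] X Y Z U V f g hX hY hZ hU hV fUV.
  by move=> cf cg; apply: (C0_comp HD hX hY hZ hU hV cf fUV cg).
move=> rf; have rfn := isCrS rf.
case: rf => cf [f1 [[_ df1] rf1]] [cg [g1 [[_ dg1] rg1]]].
have hX1 := inM_ext1 hX; have oU1 := topen_V1 hX hU.
have f_shift p : V1 U p -> f (p.1.1 + (p.2 : K) *: p.1.2) = f p.1.1 + (p.2 : K) *: f1 p.
  by move=> Up; rewrite -df1 // [f p.1.1 + _]addrC subrK.
pose lift (p : ext1 D X) : ext1 D Y := ((f p.1.1, f1 p), p.2).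
have lift_V1 p : V1 U p -> V1 V (lift p).
  move=> Up; split; first by apply: fUV; case: Up.
  by rewrite /= -f_shift //; apply: fUV; case: Up.
have rlift : isCr n (V1 U) lift.
  rewrite /lift; apply: (isCr_pair hX1 (M_prod HD hY hY) (M_K HD) oU1).
  - apply: (isCr_pair hX1 hY hY oU1) rf1.
    apply: (IH _ _ _ _ U _ f) rfn => //; first by move=> p [].
    exact: isCr_linear hX1 hX _ (C0_ext1_point hX) oU1.
  - exact: isCr_linear hX1 (M_K HD) _ (C0_ext1_scalar hX) oU1.
have rglift : isCr n (V1 U) (g1 \o lift).
  exact: (IH _ _ _ _ _ _ _ hX1 (inM_ext1 hY) hZ oU1 (topen_V1 hY hV) lift_V1 rlift rg1).
split; first exact: (C0_comp HD hX hY hZ hU hV cf fUV cg).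
exists (g1 \o lift); split=> //; split; first exact: isCr_C0 rglift.
by move=> p Up /=; rewrite f_shift //; apply: dg1 (lift_V1 p Up).
Qed.

Lemma isCr_of_chain (X Y : tmod K) (V : set X) (G : forall j, extk D X j -> Y) m j :
  C0 D (Vk (n := j) V) (G j) ->
  (forall i, (j <= i < j + m)%N -> is_deriv1 (Vk (n := i) V) (G i) (G i.+1)) ->
  isCr m (Vk (n := j) V) (G j).
Proof.
elim: m j => [|m IH] j cG dG //.
have dGj : is_deriv1 (Vk (n := j) V) (G j) (G j.+1) by apply: dG; lia.
split=> //; exists (G j.+1); split=> //.
by apply: (IH j.+1); [case: dGj | move=> i hi; apply: dG; lia].
Qed.

Definition deriv1_pick (X Y : tmod K) (m : nat) (W : set X) (h : X -> Y) :
    ext1 D X -> Y :=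
  match pselect (exists h1, is_deriv1 W h h1 /\ isCr m (V1 W) h1) with
  | left e => proj1_sig (cid e)
  | right _ => fun _ => 0
  end.

Lemma deriv1_pickP (X Y : tmod K) (m : nat) (W : set X) (h : X -> Y) :
  isCr m.+1 W h ->
  is_deriv1 W h (deriv1_pick m W h) /\ isCr m (V1 W) (deriv1_pick m W h).
Proof.
move=> [_ ex]; rewrite /deriv1_pick; case: pselect => [e|//].
exact: (proj2_sig (cid e)).
Qed.

(** The i-th [1]-map of g, chosen so that it stays C^(n-i) on V^[i]. *)
Fixpoint deriv_chain (X Y : tmod K) (V : set X) (g : X -> Y) (n i : nat) :
    extk D X i -> Y :=
  match i return extk D X i -> Y with
  | 0 => g
  | i'.+1 => deriv1_pick (n - i'.+1) (Vk (n := i') V) (deriv_chain V g n (i := i'))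
  end.
Arguments deriv_chain {X Y} V g n i.

Lemma isCr_deriv_chain (X Y : tmod K) (V : set X) (g : X -> Y) n i :
  isCr n V g -> (i <= n)%N -> isCr (n - i) (Vk (n := i) V) (deriv_chain V g n i).
Proof.
move=> rg; elim: i => [|i IH] hi; first by rewrite subn0.
have := IH (ltnW hi); have -> : (n - i = (n - i.+1).+1)%N by lia.
by case/deriv1_pickP.
Qed.

Lemma isCnP (X Y : tmod K) n (V : set X) (g : X -> Y) :
  isCr n V g <-> isCn D n V g.
Proof.
split=> [rg | [cg [G [G0 dG]]]].
  split; first exact: isCr_C0 rg.
  exists (deriv_chain V g n); split=> // j hj.
  have := isCr_deriv_chain rg (ltnW hj); have -> : (n - j = (n - j.+1).+1)%N by lia.
  by case/deriv1_pickP.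
apply: (eq_isCr (g := G 0%N)) => [x /G0 //|].
apply: isCr_of_chain => [|i hi]; last by apply: dG.
by apply: (C0_ext HD _ cg) => x /G0.
Qed.

End C0Calculus.

Theorem proposition4p5 (K : topRing) (D : C0data K) (HD : C0concept D)
    (k : smoothness) (E F H : tmod K) (U : set E) (V : set F)
    (f : E -> F) (g : F -> H) :
  inM D E -> inM D F -> inM D H ->
  topen E U -> topen F V ->
  (forall x, U x -> V (f x)) ->
  isCk D k U f -> isCk D k V g -> isCk D k U (g \o f).
Proof.
move=> hE hF hH hU hV fUV.
have compCn n : isCn D n U f -> isCn D n V g -> isCn D n U (g \o f).
  move=> /(isCnP HD) rf /(isCnP HD) rg; apply/(isCnP HD).
  exact: isCr_comp rf rg.
by case: k => [n|] /=; [apply: compCn | move=> hf hg n; apply: compCn].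
Qed.
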